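(* Let $W_1,W_2,W_3\in\mathbb R^{n\times n}$, $J\in\mathbb R^n$, and $\Phi:\mathbb R^n\to\mathbb R^n$ with $\|\Phi(x)-\Phi(y)\|\le\|W_3(x-y)\|$ for all $x,y$ (Euclidean norm). Let $x^\star\in\mathbb R^n$ satisfy $W_1x^\star+W_2\Phi(x^\star)+J=0$. Suppose there exist $\delta>0$ and $\varepsilon>0$ with $$\tfrac12\big(W_1+W_1^T+\varepsilon W_2W_2^T+\varepsilon^{-1}W_3^TW_3\big)\le\delta I$$ (in the positive semidefinite order). Let $\epsilon_1,\epsilon_2>0$, $0<p<1$, $q>1$, $\bar\alpha=\epsilon_12^{(1+p)/2}$, $\bar\beta=\epsilon_2n^{(1-q)/2}2^{(1+q)/2}$, and assume $\bar\alpha-2\delta>0$, $\bar\beta-2\delta>0$. Then every solution of $$\dot x=W_1x+W_2\Phi(x)+J-\epsilon_1\mathrm{sig}^p(x-x^\star)-\epsilon_2\mathrm{sig}^q(x-x^\star)$$ satisfies $x(t)=x^\star$ for all $t\ge T_{\max}=\frac{2}{(\bar\alpha-2\delta)(1-p)}+\frac{2}{(\bar\beta-2\delta)(q-1)}$, whatever the initial value.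
   Context: For $x\in\mathbb R^n$ and $r>0$, $\mathrm{sig}^r(x)=(\mathrm{sign}(x^1)|x^1|^r,\dots,\mathrm{sign}(x^n)|x^n|^r)^T$. *)

From Stdlib Require Import Reals Lra.
Open Scope R_scope.

(* Vectors in R^n are represented as nat -> R (only indices < n matter);
   n x n matrices as nat -> nat -> R (only indices < n matter). *)
Definition vec := nat -> R.
Definition mat := nat -> nat -> R.

Fixpoint rsum (n : nat) (f : nat -> R) : R :=
  match n with
  | O => 0
  | S m => rsum m f + f m
  end.

Definition dot (n : nat) (u v : vec) : R := rsum n (fun i => u i * v i).
Definition vnorm (n : nat) (u : vec) : R := sqrt (dot n u u).

Definition vsub (u v : vec) : vec := fun i => u i - v i.
Definition matvec (n : nat) (A : mat) (x : vec) : vec :=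
  fun i => rsum n (fun j => A i j * x j).

Definition transp (A : mat) : mat := fun i j => A j i.
Definition mmul (n : nat) (A B : mat) : mat :=
  fun i j => rsum n (fun k => A i k * B k j).
Definition madd (A B : mat) : mat := fun i j => A i j + B i j.
Definition mscale (c : R) (A : mat) : mat := fun i j => c * A i j.
Definition idmat : mat := fun i j => if Nat.eqb i j then 1 else 0.

Definition loewner_le (n : nat) (A B : mat) : Prop :=
  forall v : vec, 0 <= dot n v (matvec n (fun i j => B i j - A i j) v).

Definition sigr (r v : R) : R :=
  if Rlt_dec 0 v then Rpower v r
  else if Rlt_dec v 0 then - Rpower (- v) r
  else 0.

Definition sig (r : R) (x : vec) : vec := fun i => sigr r (x i).

(* Take V = |x - x*|^2 / 2.  After subtracting the equilibrium equation, the
   LMI together with Young's inequality bounds the W1-, W2- and Phi-terms of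
   dV/dt by 2 delta V, while e . sig^r(e) = sum_i |e_i|^(1+r) is bounded below
   by 2^P V^P (subadditivity of concave powers, P = (1+p)/2 < 1) and by
   n^(1-Q) 2^Q V^Q (power mean inequality, Q = (1+q)/2 > 1).  Since
   V <= V^P + V^Q this gives dV/dt <= -(alpha - 2 delta) V^P - (beta - 2 delta) V^Q.
   Integrating the derivative of V^(1-Q), V falls below 1 within time
   1/((beta - 2 delta)(Q - 1)); integrating that of V^(1-P), it then reaches 0
   within 1/((alpha - 2 delta)(1 - P)); these two times add up to T_max. *)

From Stdlib Require Import Reals Lra Lia.
Open Scope R_scope.

Lemma rsum_ext n f g : (forall i, (i < n)%nat -> f i = g i) -> rsum n f = rsum n g.
Proof.
  induction n as [|n IH]; intros Hfg; simpl; [reflexivity|].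
  rewrite IH by (intros; apply Hfg; lia). rewrite Hfg by lia. reflexivity.
Qed.

Lemma rsum_add n f g : rsum n (fun i => f i + g i) = rsum n f + rsum n g.
Proof. induction n as [|n IH]; simpl; [lra|]. rewrite IH; lra. Qed.

Lemma rsum_sub n f g : rsum n (fun i => f i - g i) = rsum n f - rsum n g.
Proof. induction n as [|n IH]; simpl; [lra|]. rewrite IH; lra. Qed.

Lemma rsum_scal n c f : rsum n (fun i => c * f i) = c * rsum n f.
Proof. induction n as [|n IH]; simpl; [lra|]. rewrite IH; lra. Qed.

Lemma rsum_const n c : rsum n (fun _ => c) = INR n * c.
Proof. induction n as [|n IH]; simpl rsum; [simpl; lra|]. rewrite IH, S_INR; lra. Qed.

Lemma rsum_le n f g : (forall i, (i < n)%nat -> f i <= g i) -> rsum n f <= rsum n g.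
Proof.
  induction n as [|n IH]; intros Hfg; simpl; [lra|].
  assert (rsum n f <= rsum n g) by (apply IH; intros; apply Hfg; lia).
  assert (f n <= g n) by (apply Hfg; lia).
  lra.
Qed.

Lemma rsum_nonneg n f : (forall i, (i < n)%nat -> 0 <= f i) -> 0 <= rsum n f.
Proof.
  intros Hf. replace 0 with (rsum n (fun _ => 0)) by (rewrite rsum_const; lra).
  now apply rsum_le.
Qed.

Lemma rsum_term_le n f k :
  (forall i, (i < n)%nat -> 0 <= f i) -> (k < n)%nat -> f k <= rsum n f.
Proof.
  induction n as [|n IH]; intros Hf Hk; simpl; [lia|].
  assert (0 <= f n) by (apply Hf; lia).
  destruct (Nat.eq_dec k n) as [->|Hkn].
  - assert (0 <= rsum n f) by (apply rsum_nonneg; intros; apply Hf; lia). lra.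
  - assert (f k <= rsum n f) by (apply IH; [intros; apply Hf|]; lia). lra.
Qed.

Lemma rsum_swap n m (f : nat -> nat -> R) :
  rsum n (fun i => rsum m (f i)) = rsum m (fun j => rsum n (fun i => f i j)).
Proof.
  induction n as [|n IH]; simpl.
  - rewrite rsum_const; simpl; lra.
  - rewrite IH, <- rsum_add; reflexivity.
Qed.

Lemma dot_comm n u v : dot n u v = dot n v u.
Proof. apply rsum_ext; intros; ring. Qed.

Lemma dot_self_nonneg n u : 0 <= dot n u u.
Proof. apply rsum_nonneg; intros; apply Rle_0_sqr. Qed.

Lemma dot_self_eq0 n u : dot n u u = 0 -> forall i, (i < n)%nat -> u i = 0.
Proof.
  intros Hu i Hi.
  assert (u i * u i <= dot n u u)
    by (apply (rsum_term_le n (fun j => u j * u j)); auto; intros; apply Rle_0_sqr).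
  assert (0 <= u i * u i) by apply Rle_0_sqr.
  nra.
Qed.

Lemma dot_young n u v c :
  0 < c -> dot n u v <= c / 2 * dot n u u + / c / 2 * dot n v v.
Proof.
  intros Hc. unfold dot. rewrite <- !rsum_scal, <- rsum_add.
  apply rsum_le; intros i _.
  assert (0 <= / c * (c * u i - v i) ^ 2)
    by (apply Rmult_le_pos; [left; apply Rinv_0_lt_compat, Hc | apply pow2_ge_0]).
  replace (/ c * (c * u i - v i) ^ 2)
    with (c * u i * u i - 2 * u i * v i + / c * v i * v i) in H by (field; lra).
  lra.
Qed.

Lemma matvec_vsub n A u v i :
  matvec n A (vsub u v) i = matvec n A u i - matvec n A v i.
Proof. unfold matvec, vsub. rewrite <- rsum_sub. apply rsum_ext; intros; ring. Qed.

Lemma dot_matvec_transp n u A w :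
  dot n u (matvec n A w) = dot n (matvec n (transp A) u) w.
Proof.
  unfold dot, matvec, transp.
  transitivity (rsum n (fun i => rsum n (fun j => u i * A i j * w j))).
  - apply rsum_ext; intros. rewrite <- rsum_scal. apply rsum_ext; intros; ring.
  - rewrite rsum_swap. apply rsum_ext; intros.
    rewrite Rmult_comm, <- rsum_scal. apply rsum_ext; intros; ring.
Qed.

Lemma matvec_mmul n A B v i :
  matvec n (mmul n A B) v i = matvec n A (matvec n B v) i.
Proof.
  unfold matvec, mmul.
  transitivity (rsum n (fun j => rsum n (fun k => A i k * B k j * v j))).
  - apply rsum_ext; intros. rewrite Rmult_comm, <- rsum_scal. apply rsum_ext; intros; ring.
  - rewrite rsum_swap. apply rsum_ext; intros.
    rewrite <- rsum_scal. apply rsum_ext; intros; ring.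
Qed.

Definition qform (n : nat) (M : mat) (v : vec) : R := dot n v (matvec n M v).

Lemma qform_lincomb n M A B a b v :
  (forall i j, M i j = a * A i j + b * B i j) ->
  qform n M v = a * qform n A v + b * qform n B v.
Proof.
  intros HM. unfold qform, dot, matvec. rewrite <- !rsum_scal, <- rsum_add.
  apply rsum_ext; intros i _.
  transitivity (v i * rsum n (fun j => a * (A i j * v j) + b * (B i j * v j))).
  - f_equal. apply rsum_ext; intros j _. rewrite HM; ring.
  - rewrite rsum_add, !rsum_scal. ring.
Qed.

Lemma qform_idmat n v : qform n idmat v = dot n v v.
Proof.
  apply rsum_ext; intros i Hi. f_equal. unfold matvec, idmat.
  clear -Hi. induction n as [|n IH]; [lia|]. simpl.
  destruct (Nat.eqb_spec i n) as [->|Hin].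
  - rewrite (rsum_ext n _ (fun _ => 0)), rsum_const; [ring|].
    intros j Hj. destruct (Nat.eqb_spec n j); [lia | ring].
  - rewrite IH by lia. ring.
Qed.

Lemma qform_transp n A v : qform n (transp A) v = qform n A v.
Proof. unfold qform. rewrite dot_matvec_transp, dot_comm. reflexivity. Qed.

Lemma qform_mmul n A B v :
  qform n (mmul n A B) v = dot n (matvec n (transp A) v) (matvec n B v).
Proof.
  unfold qform. rewrite <- dot_matvec_transp.
  apply rsum_ext; intros. rewrite matvec_mmul; reflexivity.
Qed.

Lemma lmi_dissipation_bound n W1 W2 W3 delta eps (e d : vec) :
  0 < eps ->
  loewner_le n
    (mscale (1/2) (madd (madd (madd W1 (transp W1))
                              (mscale eps (mmul n W2 (transp W2))))
                        (mscale (/ eps) (mmul n (transp W3) W3))))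
    (mscale delta idmat) ->
  dot n d d <= dot n (matvec n W3 e) (matvec n W3 e) ->
  dot n e (matvec n W1 e) + dot n e (matvec n W2 d) <= delta * dot n e e.
Proof.
  intros Heps HLMI Hd.
  set (u := matvec n (transp W2) e). set (w := matvec n W3 e).
  assert (Hlmi : 0 <= delta * dot n e e
                      - / 2 * (2 * qform n W1 e + eps * dot n u u + / eps * dot n w w)).
  { specialize (HLMI e).
    set (S := madd (madd W1 (transp W1)) (mscale eps (mmul n W2 (transp W2)))) in HLMI.
    set (M := madd S (mscale (/ eps) (mmul n (transp W3) W3))) in HLMI.
    fold (qform n (fun i j => mscale delta idmat i j - mscale (1/2) M i j) e) in HLMI.
    rewrite (qform_lincomb n _ idmat M delta (- / 2)) in HLMI
      by (intros; unfold mscale; field).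
    rewrite (qform_lincomb n M S (mmul n (transp W3) W3) 1 (/ eps)) in HLMI
      by (intros; unfold M, madd, mscale; ring).
    rewrite (qform_lincomb n S (madd W1 (transp W1)) (mmul n W2 (transp W2)) 1 eps) in HLMI
      by (intros; unfold S, madd, mscale; ring).
    rewrite (qform_lincomb n (madd W1 (transp W1)) W1 (transp W1) 1 1) in HLMI by (intros; unfold madd; ring).
    rewrite qform_idmat, qform_transp, !qform_mmul in HLMI.
    change (transp (transp W3)) with W3 in HLMI. fold u w in HLMI. lra. }
  assert (Hyoung : dot n e (matvec n W2 d) <= eps / 2 * dot n u u + / eps / 2 * dot n d d)
    by (rewrite dot_matvec_transp; apply dot_young, Heps).
  assert (/ eps / 2 * dot n d d <= / eps / 2 * dot n w w).
  { apply Rmult_le_compat_l; [|exact Hd].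
    assert (0 < / eps) by (apply Rinv_0_lt_compat, Heps). lra. }
  unfold qform in Hlmi. lra.
Qed.

Lemma ln_nonpos x : 0 < x <= 1 -> ln x <= 0.
Proof.
  intros [Hx [Hlt| ->]]; [|rewrite ln_1; lra].
  rewrite <- ln_1. left. now apply ln_increasing.
Qed.

Lemma ln_nonneg x : 1 <= x -> 0 <= ln x.
Proof.
  intros [Hlt| <-]; [|rewrite ln_1; lra].
  rewrite <- ln_1. left. apply ln_increasing; lra.
Qed.

Lemma Rpower_le_exponent x r s : (r - s) * ln x <= 0 -> Rpower x r <= Rpower x s.
Proof.
  intros H. unfold Rpower.
  destruct (Rle_lt_or_eq_dec (r * ln x) (s * ln x)) as [Hlt|Heq]; [lra| |].
  - left. now apply exp_increasing.
  - rewrite Heq. lra.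
Qed.

Lemma Rpower_mul_self e r : 0 < e -> e * Rpower e r = Rpower (e * e) ((1 + r) / 2).
Proof.
  intros He. rewrite <- Rpower_mult_distr, <- Rpower_plus by exact He.
  replace ((1 + r) / 2 + (1 + r) / 2) with (1 + r) by field.
  rewrite Rpower_plus, Rpower_1 by exact He. reflexivity.
Qed.

(* [Rpower 0 r = 1] because of the junk value [ln 0 = 0]; [Rpower0] is [0] at
   [0] instead, the continuous extension of [y ^ r] for [r > 0]. *)
Definition Rpower0 (y r : R) : R := if Rlt_dec 0 y then Rpower y r else 0.

Lemma Rpower0_pos y r : 0 < y -> Rpower0 y r = Rpower y r.
Proof. unfold Rpower0; destruct (Rlt_dec 0 y); lra. Qed.

Lemma Rpower0_0 r : Rpower0 0 r = 0.
Proof. unfold Rpower0; destruct (Rlt_dec 0 0); lra. Qed.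

Lemma Rpower0_nonneg y r : 0 <= Rpower0 y r.
Proof. unfold Rpower0; destruct (Rlt_dec 0 y); [left; apply exp_pos | lra]. Qed.

Lemma Rpower0_mult c y r : 0 < c -> 0 <= y -> Rpower0 (c * y) r = Rpower c r * Rpower0 y r.
Proof.
  intros Hc [Hy| <-].
  - rewrite !Rpower0_pos by nra. now rewrite Rpower_mult_distr.
  - rewrite Rmult_0_r, Rpower0_0. ring.
Qed.

Lemma mul_sigr e r : e * sigr r e = Rpower0 (e * e) ((1 + r) / 2).
Proof.
  unfold sigr. destruct (Rlt_dec 0 e) as [Hpos|Hnpos].
  - rewrite Rpower0_pos by nra. now apply Rpower_mul_self.
  - destruct (Rlt_dec e 0) as [Hneg|Hnneg].
    + rewrite Rpower0_pos by nra. replace (e * e) with (- e * - e) by ring.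
      rewrite <- Rpower_mul_self by lra. ring.
    + replace e with 0 by lra. rewrite Rmult_0_l, Rpower0_0. ring.
Qed.

Lemma le_Rpower0_add y P Q : 0 <= y -> P <= 1 <= Q -> y <= Rpower0 y P + Rpower0 y Q.
Proof.
  intros [Hy| <-] HPQ; [|rewrite !Rpower0_0; lra].
  rewrite !Rpower0_pos by exact Hy.
  assert (0 < Rpower y P) by apply exp_pos. assert (0 < Rpower y Q) by apply exp_pos.
  rewrite <- (Rpower_1 y) at 1 by exact Hy.
  destruct (Rle_lt_dec y 1) as [Hle|Hgt].
  - assert (Rpower y 1 <= Rpower y P); [|lra].
    apply Rpower_le_exponent. assert (ln y <= 0) by (apply ln_nonpos; lra). nra.
  - assert (Rpower y 1 <= Rpower y Q); [|lra].
    apply Rpower_le_exponent. assert (0 <= ln y) by (apply ln_nonneg; lra). nra.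
Qed.

Lemma Rpower0_rsum_subadditive n a P :
  (forall i, (i < n)%nat -> 0 <= a i) -> 0 < P <= 1 ->
  Rpower0 (rsum n a) P <= rsum n (fun i => Rpower0 (a i) P).
Proof.
  intros Ha HP. set (S := rsum n a).
  assert (HS : 0 <= S) by (apply rsum_nonneg, Ha).
  destruct HS as [HS| <-]; [|rewrite Rpower0_0; apply rsum_nonneg; intros; apply Rpower0_nonneg].
  (* each share [a i / S] lies in [[0, 1]], where [y <= y ^ P] *)
  apply Rle_trans with (rsum n (fun i => Rpower0 S P * (/ S * a i))).
  - rewrite rsum_scal, rsum_scal. fold S. right. field. lra.
  - apply rsum_le; intros i Hi.
    assert (a i <= S) by (apply rsum_term_le; auto).
    destruct (Ha i Hi) as [Hai| <-]; [|rewrite Rpower0_0; lra].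
    assert (Hshare : 0 < / S * a i <= 1).
    { split; [apply Rmult_lt_0_compat; [apply Rinv_0_lt_compat|]; lra|].
      apply Rmult_le_reg_l with S; [lra|]. rewrite <- Rmult_assoc, Rinv_r; lra. }
    replace (Rpower0 (a i) P) with (Rpower0 S P * Rpower (/ S * a i) P).
    + apply Rmult_le_compat_l; [apply Rpower0_nonneg|].
      rewrite <- (Rpower_1 (/ S * a i)) at 1 by lra.
      apply Rpower_le_exponent. assert (ln (/ S * a i) <= 0) by (apply ln_nonpos; lra). nra.
    + rewrite !Rpower0_pos, Rpower_mult_distr by (try apply Rinv_0_lt_compat; lra).
      f_equal. field. lra.
Qed.

Lemma Rpower_bernoulli x Q : 0 < x -> 1 <= Q -> 1 + Q * (x - 1) <= Rpower x Q.
Proof.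
  intros Hx HQ. unfold Rpower.
  (* [1 + y <= exp y] at [y = (Q - 1) ln x] and at [y = - ln x] *)
  assert (H1 := exp_ineq1_le ((Q - 1) * ln x)).
  assert (H2 := exp_ineq1_le (- ln x)).
  assert (E1 : exp (Q * ln x) = x * exp ((Q - 1) * ln x))
    by (rewrite <- (exp_ln x) at 2 by exact Hx; rewrite <- exp_plus; f_equal; ring).
  assert (E2 : x * exp (- ln x) = 1)
    by (rewrite <- (exp_ln x) at 1 by exact Hx; rewrite <- exp_plus, Rplus_opp_r, exp_0; reflexivity).
  assert (x * (1 + (Q - 1) * ln x) <= exp (Q * ln x))
    by (rewrite E1; apply Rmult_le_compat_l; lra).
  assert (x * (1 - ln x) <= 1)
    by (rewrite <- E2; apply Rmult_le_compat_l; lra).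
  nra.
Qed.

Lemma Rpower0_tangent_le a m Q : 0 <= a -> 0 < m -> 1 <= Q ->
  Rpower m Q + Q * Rpower m (Q - 1) * (a - m) <= Rpower0 a Q.
Proof.
  intros Ha Hm HQ.
  assert (Hmp : 0 < Rpower m Q) by apply exp_pos.
  replace (Rpower m (Q - 1)) with (Rpower m Q / m)
    by (unfold Rminus; rewrite Rpower_plus, Rpower_Ropp, Rpower_1 by exact Hm; reflexivity).
  destruct Ha as [Ha| <-].
  - rewrite Rpower0_pos by exact Ha.
    replace (Rpower a Q) with (Rpower m Q * Rpower (a / m) Q)
      by (rewrite Rpower_mult_distr by (try apply Rdiv_lt_0_compat; lra); f_equal; field; lra).
    replace (Rpower m Q + Q * (Rpower m Q / m) * (a - m))
      with (Rpower m Q * (1 + Q * (a / m - 1))) by (field; lra).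
    apply Rmult_le_compat_l; [lra|].
    apply Rpower_bernoulli; [apply Rdiv_lt_0_compat|]; lra.
  - rewrite Rpower0_0.
    replace (Rpower m Q + Q * (Rpower m Q / m) * (0 - m)) with (Rpower m Q * (1 - Q))
      by (field; lra).
    nra.
Qed.

Lemma Rpower0_rsum_power_mean n a Q :
  (forall i, (i < n)%nat -> 0 <= a i) -> 1 <= Q ->
  Rpower (INR n) (1 - Q) * Rpower0 (rsum n a) Q <= rsum n (fun i => Rpower0 (a i) Q).
Proof.
  intros Ha HQ. set (S := rsum n a).
  assert (HS : 0 <= S) by (apply rsum_nonneg, Ha).
  destruct HS as [HS| <-].
  2:{ rewrite Rpower0_0, Rmult_0_r. apply rsum_nonneg; intros; apply Rpower0_nonneg. }
  assert (Hn : 0 < INR n).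
  { destruct n; [unfold S in HS; simpl in HS; lra|]. apply lt_0_INR; lia. }
  (* sum the tangent lines of [y ^ Q] at the mean [m]; their linear parts cancel *)
  set (m := S / INR n). assert (Hm : 0 < m) by (apply Rdiv_lt_0_compat; assumption).
  apply Rle_trans with (rsum n (fun i => Rpower m Q + Q * Rpower m (Q - 1) * (a i - m))).
  - rewrite rsum_add, rsum_const, rsum_scal, rsum_sub, rsum_const. fold S.
    replace (S - INR n * m) with 0 by (unfold m; field; lra).
    rewrite Rpower0_pos by exact HS. unfold m, Rdiv.
    rewrite <- Rpower_mult_distr by (try apply Rinv_0_lt_compat; assumption).
    replace (Rpower (/ INR n) Q) with (Rpower (INR n) (1 - Q) / INR n).
    + right. field. lra.
    + unfold Rminus. rewrite Rpower_plus, Rpower_1 by exact Hn.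
      unfold Rpower. rewrite ln_Rinv by exact Hn.
      replace (Q * - ln (INR n)) with (- Q * ln (INR n)) by ring. field. lra.
  - apply rsum_le; intros. apply Rpower0_tangent_le; auto.
Qed.

Definition half_sqnorm (n : nat) (v : vec) : R := / 2 * dot n v v.

Lemma half_sqnorm_nonneg n v : 0 <= half_sqnorm n v.
Proof. unfold half_sqnorm. assert (H := dot_self_nonneg n v). lra. Qed.

Lemma dot_sig n e r : dot n e (sig r e) = rsum n (fun i => Rpower0 (e i * e i) ((1 + r) / 2)).
Proof. apply rsum_ext; intros. apply mul_sigr. Qed.

Lemma dot_sig_ge_subadditive n e p : -1 < p <= 1 ->
  Rpower 2 ((1 + p) / 2) * Rpower0 (half_sqnorm n e) ((1 + p) / 2) <= dot n e (sig p e).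
Proof.
  intros Hp. rewrite dot_sig, <- Rpower0_mult by (lra || apply half_sqnorm_nonneg).
  replace (2 * half_sqnorm n e) with (rsum n (fun i => e i * e i)) by (unfold half_sqnorm, dot; field).
  apply Rpower0_rsum_subadditive; [intros; apply Rle_0_sqr | lra].
Qed.

Lemma dot_sig_ge_power_mean n e q : 1 <= q ->
  Rpower (INR n) ((1 - q) / 2) * Rpower 2 ((1 + q) / 2) * Rpower0 (half_sqnorm n e) ((1 + q) / 2)
  <= dot n e (sig q e).
Proof.
  intros Hq. rewrite dot_sig, Rmult_assoc, <- Rpower0_mult by (lra || apply half_sqnorm_nonneg).
  replace (2 * half_sqnorm n e) with (rsum n (fun i => e i * e i)) by (unfold half_sqnorm, dot; field).
  replace ((1 - q) / 2) with (1 - (1 + q) / 2) by field.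
  apply Rpower0_rsum_power_mean; [intros; apply Rle_0_sqr | lra].
Qed.

Lemma rsum_derivable (g : R -> nat -> R) (g' : nat -> R) t n :
  (forall i, (i < n)%nat -> derivable_pt_lim (fun s => g s i) t (g' i)) ->
  derivable_pt_lim (fun s => rsum n (g s)) t (rsum n g').
Proof.
  induction n as [|n IH]; intros Hg; simpl.
  - apply derivable_pt_lim_const.
  - change (derivable_pt_lim ((fun s => rsum n (g s)) + (fun s => g s n))%F t (rsum n g' + g' n)).
    apply derivable_pt_lim_plus; [apply IH; intros; apply Hg | apply Hg]; lia.
Qed.

Lemma half_sqnorm_derivable n (f : R -> vec) (f' : vec) t :
  (forall i, (i < n)%nat -> derivable_pt_lim (fun s => f s i) t (f' i)) ->
  derivable_pt_lim (fun s => half_sqnorm n (f s)) t (dot n (f t) f').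
Proof.
  intros Hf. unfold half_sqnorm, dot.
  replace (rsum n (fun i => f t i * f' i)) with (/ 2 * rsum n (fun i => 2 * (f t i * f' i)))
    by (rewrite rsum_scal; field).
  change (derivable_pt_lim (mult_real_fct (/ 2) (fun s => rsum n (fun i => f s i * f s i))) t
            (/ 2 * rsum n (fun i => 2 * (f t i * f' i)))).
  apply derivable_pt_lim_scal, rsum_derivable. intros i Hi.
  replace (2 * (f t i * f' i)) with (f' i * f t i + f t i * f' i) by ring.
  apply (derivable_pt_lim_mult (fun s => f s i) (fun s => f s i)); apply Hf, Hi.
Qed.

Lemma mvt_le f f' a b L : a < b ->
  (forall c, a <= c <= b -> derivable_pt_lim f c (f' c)) ->
  (forall c, a < c < b -> f' c <= L) -> f b - f a <= L * (b - a).
Proof.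
  intros Hab Hd HL. destruct (MVT_cor2 f f' a b Hab Hd) as [c [-> Hc]].
  apply Rmult_le_compat_r; [lra | apply HL, Hc].
Qed.

Lemma continuity_pt_zero_right f x :
  continuity_pt f x -> (forall y, x < y -> f y = 0) -> f x = 0.
Proof.
  intros Hc Hz. destruct (Req_dec (f x) 0) as [|Hne]; [assumption|exfalso].
  destruct (Hc (Rabs (f x)) (Rabs_pos_lt _ Hne)) as [d [Hd Hclose]].
  assert (Hy : Rabs (f (x + d / 2) - f x) < Rabs (f x)).
  { apply (Hclose (x + d / 2)). split; [split; [exact I | lra]|].
    simpl. unfold R_dist. rewrite Rabs_right; lra. }
  rewrite Hz, Rminus_0_l, Rabs_Ropp in Hy by lra. lra.
Qed.

Section FixedTimeStability.

Variables U D : R -> R.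
Hypothesis U_derivable : forall t, 0 < t -> derivable_pt_lim U t (D t).
Hypothesis U_nonneg : forall t, 0 <= U t.

Lemma antitone_of_deriv_nonpos :
  (forall t, 0 < t -> D t <= 0) -> forall s t, 0 < s -> s <= t -> U t <= U s.
Proof.
  intros HD s t Hs [Hst| <-]; [|lra].
  assert (U t - U s <= 0 * (t - s)); [|lra].
  apply mvt_le with D; [exact Hst | |].
  - intros; apply U_derivable; lra.
  - intros; apply HD; lra.
Qed.

(* For [r <> 1], [U ^ (1 - r) / (1 - r)] has derivative [U ^ (- r) * D <= - c]. *)
Lemma Rpower_decrease_rate r c a b : r <> 1 -> 0 < a < b ->
  (forall s, a <= s <= b -> 0 < U s) ->
  (forall s, a < s < b -> D s <= - c * Rpower (U s) r) ->
  / (1 - r) * (Rpower (U b) (1 - r) - Rpower (U a) (1 - r)) <= - c * (b - a).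
Proof.
  intros Hr Hab Hpos HD.
  rewrite Rmult_minus_distr_l.
  apply (mvt_le (fun s => / (1 - r) * Rpower (U s) (1 - r))
                (fun s => Rpower (U s) (- r) * D s)); [lra| |].
  - intros s Hs.
    replace (Rpower (U s) (- r) * D s)
      with (/ (1 - r) * ((1 - r) * Rpower (U s) (1 - r - 1) * D s))
      by (replace (1 - r - 1) with (- r) by ring; field; lra).
    apply derivable_pt_lim_scal.
    rewrite Rmult_assoc, <- (Rmult_assoc (1 - r)).
    apply (derivable_pt_lim_comp U (fun y => Rpower y (1 - r))).
    + apply U_derivable; lra.
    + apply derivable_pt_lim_power, Hpos; lra.
  - intros s Hs.
    assert (Hu : 0 < Rpower (U s) r) by apply exp_pos.
    rewrite Rpower_Ropp.
    apply Rmult_le_reg_l with (Rpower (U s) r); [exact Hu|].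
    rewrite <- Rmult_assoc, Rinv_r by lra.
    specialize (HD s Hs). nra.
Qed.

Lemma fixed_time_below_one c Q tau : 0 < c -> 1 < Q -> 0 < tau ->
  (forall t, 0 < t -> D t <= - c * Rpower0 (U t) Q) ->
  U (tau + 1 / (c * (Q - 1))) <= 1.
Proof.
  intros Hc HQ Htau HD. set (b := tau + 1 / (c * (Q - 1))).
  assert (HT : 0 < 1 / (c * (Q - 1))) by (apply Rdiv_lt_0_compat; nra).
  destruct (Rle_lt_dec (U b) 1) as [|Hgt]; [assumption|exfalso].
  assert (Hpos : forall s, tau <= s <= b -> 0 < U s).
  { intros s Hs.
    assert (U b <= U s); [|lra].
    apply antitone_of_deriv_nonpos; [|lra|lra].
    intros t Ht. specialize (HD t Ht). assert (H0 := Rpower0_nonneg (U t) Q). nra. }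
  assert (Hrate := Rpower_decrease_rate Q c tau b ltac:(lra) ltac:(unfold b; lra) Hpos
    ltac:(intros s Hs; rewrite <- Rpower0_pos by (apply Hpos; lra); apply HD; lra)).
  (* [U ^ (1 - Q)] grows by [1] over the interval, but [U b > 1] keeps it below [1] *)
  replace (- c * (b - tau)) with (/ (1 - Q)) in Hrate by (unfold b; field; lra).
  assert (Hb : Rpower (U b) (1 - Q) <= 1).
  { apply Rle_trans with (Rpower (U b) 0); [|rewrite Rpower_O; lra].
    apply Rpower_le_exponent. assert (0 <= ln (U b)) by (apply ln_nonneg; lra). nra. }
  assert (Ha : 0 < Rpower (U tau) (1 - Q)) by apply exp_pos.
  assert (Hinv : / (1 - Q) < 0) by (apply Rinv_lt_0_compat; lra).
  nra.
Qed.

Lemma fixed_time_vanish c P t0 : 0 < c -> 0 < P < 1 -> 0 < t0 -> U t0 <= 1 ->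
  (forall t, 0 < t -> D t <= - c * Rpower0 (U t) P) ->
  U (t0 + 1 / (c * (1 - P))) = 0.
Proof.
  intros Hc HP Ht0 Hle HD. set (b := t0 + 1 / (c * (1 - P))).
  assert (HT : 0 < 1 / (c * (1 - P))) by (apply Rdiv_lt_0_compat; nra).
  destruct (Rle_lt_dec (U b) 0) as [|Hgt]; [assert (H0 := U_nonneg b); lra|exfalso].
  assert (Hpos : forall s, t0 <= s <= b -> 0 < U s).
  { intros s Hs.
    assert (U b <= U s); [|lra].
    apply antitone_of_deriv_nonpos; [|lra|lra].
    intros t Ht. specialize (HD t Ht). assert (H0 := Rpower0_nonneg (U t) P). nra. }
  assert (Hrate := Rpower_decrease_rate P c t0 b ltac:(lra) ltac:(unfold b; lra) Hpos
    ltac:(intros s Hs; rewrite <- Rpower0_pos by (apply Hpos; lra); apply HD; lra)).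
  (* [U ^ (1 - P)] starts at most [1] and drops by [1], yet stays positive *)
  replace (- c * (b - t0)) with (- / (1 - P)) in Hrate by (unfold b; field; lra).
  assert (Ha : Rpower (U t0) (1 - P) <= 1).
  { apply Rle_trans with (Rpower (U t0) 0); [|rewrite Rpower_O by (apply Hpos; unfold b; lra); lra].
    apply Rpower_le_exponent.
    assert (ln (U t0) <= 0) by (apply ln_nonpos; split; [apply Hpos|]; unfold b; lra). nra. }
  assert (Hb : 0 < Rpower (U b) (1 - P)) by apply exp_pos.
  assert (Hinv : 0 < / (1 - P)) by (apply Rinv_0_lt_compat; lra).
  nra.
Qed.

Theorem fixed_time_stability c1 c2 P Q : 0 < c1 -> 0 < c2 -> 0 < P < 1 -> 1 < Q ->
  (forall t, 0 < t -> D t <= - c1 * Rpower0 (U t) P - c2 * Rpower0 (U t) Q) ->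
  forall t, 1 / (c1 * (1 - P)) + 1 / (c2 * (Q - 1)) <= t -> U t = 0.
Proof.
  intros Hc1 Hc2 HP HQ HD.
  set (T1 := 1 / (c1 * (1 - P))). set (T2 := 1 / (c2 * (Q - 1))).
  assert (HT1 : 0 < T1) by (apply Rdiv_lt_0_compat; nra).
  assert (HT2 : 0 < T2) by (apply Rdiv_lt_0_compat; nra).
  assert (HDP : forall t, 0 < t -> D t <= - c1 * Rpower0 (U t) P).
  { intros t Ht. specialize (HD t Ht). assert (H0 := Rpower0_nonneg (U t) Q). nra. }
  assert (HDQ : forall t, 0 < t -> D t <= - c2 * Rpower0 (U t) Q).
  { intros t Ht. specialize (HD t Ht). assert (H0 := Rpower0_nonneg (U t) P). nra. }
  (* from any [tau > 0]: [U <= 1] after [T2], then [U = 0] after [T1] more *)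
  assert (Hafter : forall t, T1 + T2 < t -> U t = 0).
  { intros t Ht. set (tau := t - (T1 + T2)).
    replace t with (tau + T2 + T1) by (unfold tau; ring).
    apply (fixed_time_vanish c1 P); [exact Hc1 | exact HP | unfold tau; lra | | exact HDP].
    apply (fixed_time_below_one c2 Q); [exact Hc2 | exact HQ | unfold tau; lra | exact HDQ]. }
  intros t [Hlt| <-]; [now apply Hafter|].
  apply continuity_pt_zero_right; [|exact Hafter].
  apply derivable_continuous_pt. exists (D (T1 + T2)). apply U_derivable. lra.
Qed.

End FixedTimeStability.

Section Dissipation.

Variables (n : nat) (W1 W2 W3 : mat) (J : vec) (Phi : vec -> vec) (xstar : vec).
Variables delta eps eps1 eps2 p q : R.
Hypothesis HPhi : forall x y : vec,
  vnorm n (vsub (Phi x) (Phi y)) <= vnorm n (matvec n W3 (vsub x y)).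
Hypothesis Heq : forall i, (i < n)%nat ->
  matvec n W1 xstar i + matvec n W2 (Phi xstar) i + J i = 0.
Hypotheses (Hdelta : 0 <= delta) (Heps : 0 < eps).
Hypothesis HLMI : loewner_le n
  (mscale (1/2) (madd (madd (madd W1 (transp W1)) (mscale eps (mmul n W2 (transp W2))))
                      (mscale (/ eps) (mmul n (transp W3) W3))))
  (mscale delta idmat).
Hypotheses (Heps1 : 0 < eps1) (Heps2 : 0 < eps2).
Hypotheses (Hp : -1 < p <= 1) (Hq : 1 <= q).

Lemma lyapunov_dissipation z :
  dot n (vsub z xstar) (fun i => matvec n W1 z i + matvec n W2 (Phi z) i + J i
                                 - eps1 * sig p (vsub z xstar) i
                                 - eps2 * sig q (vsub z xstar) i)
  <= - (eps1 * Rpower 2 ((1 + p) / 2) - 2 * delta)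
       * Rpower0 (half_sqnorm n (vsub z xstar)) ((1 + p) / 2)
     - (eps2 * Rpower (INR n) ((1 - q) / 2) * Rpower 2 ((1 + q) / 2) - 2 * delta)
       * Rpower0 (half_sqnorm n (vsub z xstar)) ((1 + q) / 2).
Proof.
  set (e := vsub z xstar). set (d := vsub (Phi z) (Phi xstar)).
  set (V := half_sqnorm n e).
  assert (Hsplit : dot n e (fun i => matvec n W1 z i + matvec n W2 (Phi z) i + J i
                                      - eps1 * sig p e i - eps2 * sig q e i)
    = dot n e (matvec n W1 e) + dot n e (matvec n W2 d)
      - eps1 * dot n e (sig p e) - eps2 * dot n e (sig q e)).
  { unfold dot. rewrite <- !rsum_scal, <- rsum_add, <- !rsum_sub.
    apply rsum_ext; intros i Hi. unfold e, d. rewrite !matvec_vsub.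
    specialize (Heq i Hi). nra. }
  assert (Hlin : dot n e (matvec n W1 e) + dot n e (matvec n W2 d) <= 2 * delta * V).
  { replace (2 * delta * V) with (delta * dot n e e) by (unfold V, half_sqnorm; field).
    apply (lmi_dissipation_bound n W1 W2 W3 delta eps e d Heps HLMI).
    apply sqrt_le_0; [apply dot_self_nonneg | apply dot_self_nonneg | apply HPhi]. }
  assert (Hsigp := dot_sig_ge_subadditive n e p Hp).
  assert (Hsigq := dot_sig_ge_power_mean n e q Hq).
  assert (HV := le_Rpower0_add V ((1 + p) / 2) ((1 + q) / 2)
                  (half_sqnorm_nonneg n e) ltac:(lra)).
  fold V in Hsigp, Hsigq. rewrite Hsplit.
  assert (eps1 * (Rpower 2 ((1 + p) / 2) * Rpower0 V ((1 + p) / 2))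
          <= eps1 * dot n e (sig p e)) by (apply Rmult_le_compat_l; lra).
  assert (eps2 * (Rpower (INR n) ((1 - q) / 2) * Rpower 2 ((1 + q) / 2)
                  * Rpower0 V ((1 + q) / 2))
          <= eps2 * dot n e (sig q e)) by (apply Rmult_le_compat_l; lra).
  assert (2 * delta * V <= 2 * delta * (Rpower0 V ((1 + p) / 2) + Rpower0 V ((1 + q) / 2)))
    by (apply Rmult_le_compat_l; lra).
  lra.
Qed.

End Dissipation.

Theorem corollary2
  (n : nat) (W1 W2 W3 : mat) (J : vec) (Phi : vec -> vec)
  (HPhi : forall x y : vec,
      vnorm n (vsub (Phi x) (Phi y)) <= vnorm n (matvec n W3 (vsub x y)))
  (xstar : vec)
  (Heq : forall i, (i < n)%nat ->
      matvec n W1 xstar i + matvec n W2 (Phi xstar) i + J i = 0)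
  (delta eps : R) (Hdelta : 0 < delta) (Heps : 0 < eps)
  (HLMI : loewner_le n
      (mscale (1/2) (madd (madd (madd W1 (transp W1))
                                (mscale eps (mmul n W2 (transp W2))))
                          (mscale (/ eps) (mmul n (transp W3) W3))))
      (mscale delta idmat))
  (eps1 eps2 p q : R) (Heps1 : 0 < eps1) (Heps2 : 0 < eps2)
  (Hp0 : 0 < p) (Hp1 : p < 1) (Hq : 1 < q)
  (Halpha : eps1 * Rpower 2 ((1 + p) / 2) - 2 * delta > 0)
  (Hbeta : eps2 * Rpower (INR n) ((1 - q) / 2) * Rpower 2 ((1 + q) / 2)
           - 2 * delta > 0)
  (x : R -> vec)
  (Hsol : forall i, (i < n)%nat -> forall t, 0 < t ->
      derivable_pt_lim (fun s => x s i) t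
        (matvec n W1 (x t) i + matvec n W2 (Phi (x t)) i + J i
         - eps1 * sig p (vsub (x t) xstar) i
         - eps2 * sig q (vsub (x t) xstar) i))
  (Hcont0 : forall i, (i < n)%nat -> forall e, 0 < e ->
      exists d, 0 < d /\ forall s, 0 <= s < d -> Rabs (x s i - x 0 i) < e) :
  forall t, 2 / ((eps1 * Rpower 2 ((1 + p) / 2) - 2 * delta) * (1 - p))
            + 2 / ((eps2 * Rpower (INR n) ((1 - q) / 2) * Rpower 2 ((1 + q) / 2)
                    - 2 * delta) * (q - 1)) <= t ->
  forall i, (i < n)%nat -> x t i = xstar i.
Proof.
  intros t Ht i Hi.
  set (alpha := eps1 * Rpower 2 ((1 + p) / 2)) in *.
  set (beta := eps2 * Rpower (INR n) ((1 - q) / 2) * Rpower 2 ((1 + q) / 2)) in *.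
  set (F := fun (z : vec) i => matvec n W1 z i + matvec n W2 (Phi z) i + J i
                               - eps1 * sig p (vsub z xstar) i - eps2 * sig q (vsub z xstar) i).
  set (V := fun s => half_sqnorm n (vsub (x s) xstar)).
  assert (HVd : forall s, 0 < s ->
            derivable_pt_lim V s (dot n (vsub (x s) xstar) (F (x s)))).
  { intros s Hs. apply half_sqnorm_derivable. intros j Hj.
    replace (F (x s) j) with (F (x s) j - 0) by ring.
    apply (derivable_pt_lim_minus (fun s => x s j) (fct_cte (xstar j))).
    - apply Hsol; assumption.
    - apply derivable_pt_lim_const. }
  assert (HV : V t = 0).
  { apply (fixed_time_stability V _ HVd (fun s => half_sqnorm_nonneg n _)
             (alpha - 2 * delta) (beta - 2 * delta) ((1 + p) / 2) ((1 + q) / 2));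
      try lra.
    - intros s _. apply (lyapunov_dissipation n W1 W2 W3 J Phi xstar delta eps eps1 eps2 p q);
        auto; lra.
    - replace (1 / ((alpha - 2 * delta) * (1 - (1 + p) / 2))
               + 1 / ((beta - 2 * delta) * ((1 + q) / 2 - 1)))
        with (2 / ((alpha - 2 * delta) * (1 - p)) + 2 / ((beta - 2 * delta) * (q - 1)))
        by (field; lra).
      exact Ht. }
  unfold V, half_sqnorm in HV.
  assert (He := dot_self_eq0 n (vsub (x t) xstar) ltac:(lra) i Hi).
  unfold vsub in He. lra.
Qed.
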